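(* There exist constants $\epsilon_0\in(0,1)$ and $C>0$, independent of $k,\alpha,\beta$, such that for all $(k,\alpha,\beta)\in\mathscr I$ one has $B(y^k_\beta,\epsilon_0\delta^k)\subset Q^k_\alpha$ and $$|\psi^k_{\alpha,\beta}(x)|\ \ge\ C\,\frac{1}{\sqrt{\mu(Q^k_\alpha)}}\qquad\text{for all } x\in B(y^k_\beta,\epsilon_0\delta^k).$$
   Context: Setting. $(\mathcal X,d,\mu)$ is a metric measure space of homogeneous type: $d$ is a metric, $\mu$ is a nonnegative Borel measure, finite and positive on balls $B(x,r):=\{y:d(x,y)<r\}$, with $\mu(B(x,2r))\le C_{(\mathcal X)}\mu(B(x,r))$ for all $x\in\mathcal X$, $r>0$. It is assumed that $\operatorname{diam}\mathcal X=\infty$ and $\mu(\{x\})=0$ for all $x$. Write $V(x,r):=\mu(B(x,r))$. Dyadic structure. Fix $\delta\in(0,1/1000]$. For each $k\in\mathbb Z$ let $\mathscr X^k=\{x^k_\alpha\}_{\alpha\in\mathscr A_k}$ be reference dyadic points: $\mathscr X^0$ is a maximal $1$-separated subset of $\mathcal X$; for $k\ge1$, $\mathscr X^k\supset\mathscr X^{k-1}$ is a maximal $\delta^k$-separated subset of $\mathcal X$ and $\mathscr X^{-k}\subset\mathscr X^{-(k-1)}$ is a maximal $\delta^{-k}$-separated subset of $\mathscr X^{-(k-1)}$; indices are arranged so that $\mathscr A_k\subset\mathscr A_{k+1}$ and $x^{k+1}_\alpha=x^k_\alpha$ for $\alpha\in\mathscr A_k$. $\{Q^k_\alpha\}_{k\in\mathbb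 Z,\alpha\in\mathscr A_k}$ is the associated (Hytönen–Kairema) system of half-open dyadic cubes: for each $k$, $\mathcal X=\bigcup_{\alpha\in\mathscr A_k}Q^k_\alpha$ disjointly; for $\ell\ge k$, either $Q^\ell_\beta\subset Q^k_\alpha$ or $Q^\ell_\beta\cap Q^k_\alpha=\emptyset$; and $B(x^k_\alpha,\delta^k/3)\subset Q^k_\alpha\subset B(x^k_\alpha,4\delta^k)$. Let $L(k,\alpha):=\{\beta\in\mathscr A_{k+1}:Q^{k+1}_\beta\subset Q^k_\alpha\}$ (so $Q^k_\alpha=\bigcup_{\beta\in L(k,\alpha)}Q^{k+1}_\beta$, $\alpha\in L(k,\alpha)$, and $d(x^{k+1}_\beta,x^k_\alpha)<2\delta^k$ for $\beta\in L(k,\alpha)$), $\tilde{\mathscr A}:=\{(k,\alpha):\#L(k,\alpha)>1\}$, $\tilde L(k,\alpha):=L(k,\alpha)\setminus\{\alpha\}$, $\mathscr I:=\{(k,\alpha,\beta):(k,\alpha)\in\tilde{\mathscr A},\ \beta\in\tilde L(k,\alpha)\}$, $\mathscr G_k:=\mathscr A_{k+1}\setminus\mathscr A_k$, and $y^k_\beta:=x^{k+1}_\beta$. Wavelets. There are (Auscher–Hytönen) spline functions $s^k_\alpha$, $k\in\mathbb Z$, $\alpha\in\mathscr A_k$, with $\chi_{B(x^k_\alpha,\delta^k/8)}\le s^k_\alpha\le\chi_{B(x^k_\alpha,8\delta^k)}$, $s^k_\alpha(x^k_\beta)=\delta_{\alpha\beta}$ (Kronecker delta), $\sum_{\alpha\in\mathscr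 A_k}s^k_\alpha\equiv1$, and $|s^k_\alpha(x)-s^k_\alpha(y)|\le C(d(x,y)/\delta^k)^\eta$ for some $\eta\in(0,1]$. For each $k$, $\tilde M$ denotes the matrix indexed by $\mathscr G_k\times\mathscr G_k$ with entries $\tilde M(\gamma,\gamma')=(s^{k+1}_\gamma,s^{k+1}_{\gamma'})_{L^2}/\sqrt{V(y^k_\gamma,\delta^k)V(y^k_{\gamma'},\delta^k)}$; it is a bounded (uniformly in $k$), positive, self-adjoint and invertible operator on $\ell^2(\mathscr G_k)$. With $\mu^{k+1}_\gamma:=V(x^{k+1}_\gamma,\delta^{k+1})$, the regular wavelets are $\psi^k_{\alpha,\beta}:=\sum_{\gamma\in\mathscr G_k}\tilde M^{-1/2}(\beta,\gamma)\,s^{k+1}_\gamma/\sqrt{\mu^{k+1}_\gamma}$ for $(k,\alpha,\beta)\in\mathscr I$. They form an orthonormal basis of $L^2(\mathcal X)$, and there are constants $\nu>0$, $C>0$ such that $|\psi^k_{\alpha,\beta}(x)|\le C\,V(y^k_\beta,\delta^k)^{-1/2}e^{-\nu\delta^{-k}d(y^k_\beta,x)}$ for all $x$; $|\psi^k_{\alpha,\beta}(x)-\psi^k_{\alpha,\beta}(y)|\le C\,V(y^k_\beta,\delta^k)^{-1/2}(d(x,y)/\delta^k)^\eta e^{-\nu\delta^{-k}d(y^k_\beta,x)}$ whenever $d(x,y)\le\delta^k$; and $\int_{\mathcal X}\psi^k_{\alpha,\beta}\,d\mu=0$. *)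

From HB Require Import structures.
From mathcomp Require Import all_boot all_order all_algebra.
From mathcomp Require Import all_classical all_reals all_analysis.
Set Implicit Arguments. Unset Strict Implicit. Unset Printing Implicit Defensive.
Import Order.TTheory GRing.Theory Num.Theory.
Local Open Scope classical_set_scope.
Local Open Scope ring_scope.

Section Defs.
Variable R : realType.

Definition is_metric (T : Type) (d : T -> T -> R) : Prop :=
  (forall x y, 0 <= d x y) /\ (forall x y, d x y = 0 <-> x = y) /\
  (forall x y, d x y = d y x) /\ (forall x y z, d x z <= d x y + d y z).

Definition dball (T : Type) (d : T -> T -> R) (x : T) (r : R) : set T :=
  [set y | d x y < r].

Definition dopen (T : Type) (d : T -> T -> R) (U : set T) : Prop :=
  forall z, U z -> exists2 r, 0 < r & dball d z r `<=` U.

(** V(x,r) = mu(B(x,r)) (finite by hypothesis, so we take the real value) *)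
Definition Vol (dT : measure_display) (T : measurableType dT)
  (mu : {measure set T -> \bar R}) (d : T -> T -> R) (x : T) (r : R) : R :=
  fine (mu (dball d x r)).

Definition separated (T : Type) (d : T -> T -> R) (r : R) (S : set T) : Prop :=
  forall a b, S a -> S b -> a <> b -> r <= d a b.

Definition max_separated (T : Type) (d : T -> T -> R) (r : R) (S U : set T) : Prop :=
  S `<=` U /\ separated d r S /\
  forall S', S `<=` S' -> S' `<=` U -> separated d r S' -> S' = S.

(** The matrix K (indexed by G x G) defines a bounded operator on l^2(G) of norm <= Lam
    (equivalently: all finite sections have operator norm <= Lam). *)
Definition op_bounded (I : choiceType) (G : set I) (K : I -> I -> R) (Lam : R) : Prop :=
  forall (F : seq I), uniq F -> (forall i, i \in F -> G i) -> forall v : I -> R,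
    \sum_(i <- F) (\sum_(j <- F) K i j * v j) ^+ 2 <= Lam ^+ 2 * \sum_(j <- F) v j ^+ 2.

Definition mx_symmetric (I : choiceType) (G : set I) (K : I -> I -> R) : Prop :=
  forall i j, G i -> G j -> K i j = K j i.

(** positivity: <K v, v> >= 0 (on finitely supported v, hence on l^2 by boundedness) *)
Definition mx_positive (I : choiceType) (G : set I) (K : I -> I -> R) : Prop :=
  forall (F : seq I), uniq F -> (forall i, i \in F -> G i) -> forall v : I -> R,
    0 <= \sum_(i <- F) \sum_(j <- F) v i * K i j * v j.

(** sum over the (possibly infinite) index set G of an absolutely summable family,
    as (sum of positive parts) - (sum of negative parts) *)
Definition gsum (I : choiceType) (G : set I) (f : I -> R) : R :=
  fine (\esum_(l in G) (Num.max (f l) 0)%:E) - fine (\esum_(l in G) (Num.max (- f l) 0)%:E).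

Definition mxmul (I : choiceType) (G : set I) (A B : I -> I -> R) : I -> I -> R :=
  fun i j => gsum G (fun l => A i l * B l j).

(** P is the (unique) bounded positive self-adjoint square root of K^{-1},
    i.e. P = K^{-1/2}: P bounded, P = P^*, P >= 0 and P P K = Id on l^2(G). *)
Definition is_inv_sqrt (I : choiceType) (G : set I) (K P : I -> I -> R) : Prop :=
  (exists Lam, op_bounded G P Lam) /\ mx_symmetric G P /\ mx_positive G P /\
  forall i j, G i -> G j ->
    mxmul G (mxmul G P P) K i j = (if i == j then 1 else 0).

Definition Lset (I : Type) (T : Type) (A : int -> set I) (Q : int -> I -> set T)
  (k : int) (a : I) : set I :=
  [set b | A (k + 1) b /\ Q (k + 1) b `<=` Q k a].

Definition in_scrI (I : Type) (T : Type) (A : int -> set I) (Q : int -> I -> set T)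
  (k : int) (a b : I) : Prop :=
  A k a /\
  (exists b1 b2, Lset A Q k a b1 /\ Lset A Q k a b2 /\ b1 <> b2) /\
  Lset A Q k a b /\ b <> a.

Definition Gset (I : Type) (A : int -> set I) (k : int) : set I := A (k + 1) `\` A k.

Definition Mtilde (dT : measure_display) (T : measurableType dT) (I : Type)
  (mu : {measure set T -> \bar R}) (d : T -> T -> R) (delta : R)
  (x : I -> T) (s : int -> I -> T -> R) (k : int) (g g' : I) : R :=
  fine (\int[mu]_z (s (k + 1) g z * s (k + 1) g' z)%:E) /
  Num.sqrt (Vol mu d (x g) (delta ^ k) * Vol mu d (x g') (delta ^ k)).

(** the regular wavelet psi^k_{alpha,beta} (it does not depend on alpha),
    with P k = tilde M^{-1/2} at level k *)
Definition psi (dT : measure_display) (T : measurableType dT) (I : choiceType)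
  (mu : {measure set T -> \bar R}) (d : T -> T -> R) (delta : R)
  (A : int -> set I) (x : I -> T) (s : int -> I -> T -> R)
  (P : int -> I -> I -> R) (k : int) (b : I) (z : T) : R :=
  gsum (Gset A k) (fun g => P k b g * s (k + 1) g z /
                             Num.sqrt (Vol mu d (x g) (delta ^ (k + 1)))).

End Defs.

From HB Require Import structures.
From mathcomp Require Import all_boot all_order all_algebra.
From mathcomp Require Import all_classical all_reals all_analysis.
From mathcomp Require Import lra ring finmap.
Import Order.TTheory GRing.Theory Num.Theory.
Set Implicit Arguments. Unset Strict Implicit.
Local Open Scope classical_set_scope.
Local Open Scope ring_scope.

(* On the ball B(y_b, delta^(k+1)/8) the spline s^(k+1)_b equals 1 and, by the partition of
   unity, every other spline of level k+1 vanishes, so there psi^k_(a,b) = P_bb / sqrt V(y_b,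
   delta^(k+1)) with P = M~^(-1/2).  The dyadic points of level k+1 are separated, so by doubling
   only finitely many of them lie near y_b and the column M~ e_b has finite support.  Hence
   c := P M~ e_b is a genuine l^2 vector with P c = e_b and |c|^2 = M~_bb <= |M~|, and the
   Cauchy-Schwarz inequality for the positive form of P gives
   1 = <P c, e_b>^2 <= <P c, c> P_bb = c_b P_bb, i.e. P_bb >= 1 / (1 + |M~|).  Finally
   mu(Q^k_a) contains B(y_b, delta^(k+1)/3), whose volume is comparable to V(y_b, delta^(k+1)). *)

Section FiniteSums.
Context {R : realType} {I : eqType}.
Implicit Types (s : seq I) (f : I -> R).

Lemma sumr_subset_split s s' f : uniq s -> uniq s' -> {subset s <= s'} ->
  \sum_(i <- s') f i = \sum_(i <- s) f i + \sum_(i <- s' | i \notin s) f i.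
Proof.
move=> us us' ss'; rewrite (bigID (fun i => i \in s)) /=; congr (_ + _).
rewrite -big_filter; apply: perm_big; apply: uniq_perm => //; first exact: filter_uniq.
by move=> i; rewrite mem_filter; apply/andP/idP => [[]//|iss]; split => //; exact: ss'.
Qed.

Lemma ler_sum_subset s s' f : uniq s -> uniq s' -> {subset s <= s'} ->
  (forall i, i \in s' -> 0 <= f i) -> \sum_(i <- s) f i <= \sum_(i <- s') f i.
Proof.
move=> us us' ss' f0; rewrite (sumr_subset_split f us us' ss') lerDl.
by rewrite big_seq_cond; apply: sumr_ge0 => i /andP[/f0].
Qed.

Lemma ler_sum_mem s f i : uniq s -> i \in s ->
  (forall j, j \in s -> 0 <= f j) -> f i <= \sum_(j <- s) f j.
Proof.
move=> us si f0; rewrite (bigD1_seq i) //= lerDl big_seq_cond.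
by apply: sumr_ge0 => j /andP[/f0].
Qed.

Lemma sum_kroneckerl s b f : uniq s -> b \in s -> \sum_(i <- s) (i == b)%:R * f i = f b.
Proof.
move=> us bs; rewrite (bigD1_seq b) //= eqxx mul1r big1 ?addr0 // => i /negPf ->.
by rewrite mul0r.
Qed.

Lemma sum_kroneckerr s b f : uniq s -> b \in s -> \sum_(i <- s) f i * (i == b)%:R = f b.
Proof.
by move=> us bs; rewrite -(sum_kroneckerl f us bs); apply: eq_bigr => i _; rewrite mulrC.
Qed.

Lemma sumr_const_size s (c : R) : \sum_(i <- s) c = c * (size s)%:R.
Proof.
elim: s => [|i s IH]; first by rewrite big_nil mulr0.
by rewrite big_cons IH /= -addn1 natrD mulrDr mulr1 addrC.
Qed.

End FiniteSums.

Section UnorderedSums.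
Context {R : realType} {I : choiceType}.
Implicit Types (G : set I) (f g : I -> R) (s : seq I).

Definition is_usum G f (L : R) := forall e, 0 < e -> exists2 s0 : seq I, [set` s0] `<=` G &
  forall s, uniq s -> [set` s] `<=` G -> {subset s0 <= s} ->
    `|\sum_(i <- s) f i - L| <= e.

Lemma sum_le_esum G s f : uniq s -> [set` s] `<=` G ->
  ((\sum_(i <- s) f i)%:E <= \esum_(i in G) (f i)%:E)%E.
Proof.
move=> us sG; apply: esum_ge; exists [set` s]; first by split; [exact: finite_seq|].
by rewrite -fsbig_seq // sumEFin.
Qed.

Lemma esum_le_sums G f (B : R) :
  (forall s, uniq s -> [set` s] `<=` G -> \sum_(i <- s) f i <= B) ->
  (\esum_(i in G) (f i)%:E <= B%:E)%E.
Proof.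
move=> H; apply: ge_ereal_sup => _ [A [finA AG] <-].
rewrite fsbig_finite // sumEFin lee_fin; apply: H; first exact: fset_uniq.
by move=> i /=; rewrite in_fset_set // => /set_mem; exact: AG.
Qed.

Lemma esum_sum_gt G f S e : \esum_(i in G) (f i)%:E = S%:E -> 0 < e ->
  exists s, [/\ uniq s, [set` s] `<=` G & S - e < \sum_(i <- s) f i].
Proof.
move=> hS e0.
have : ((S - e)%:E < \esum_(i in G) (f i)%:E)%E by rewrite hS lte_fin; lra.
rewrite /esum => /ereal_sup_gt[_ [A [finA AG] <-]] H.
exists (fset_set A); split; first exact: fset_uniq.
- by move=> i /=; rewrite in_fset_set // => /set_mem; exact: AG.
- by move: H; rewrite fsbig_finite // sumEFin lte_fin.
Qed.

Lemma esum_fineK G f : (forall i, G i -> 0 <= f i) ->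
  (\esum_(i in G) (f i)%:E < +oo)%E ->
  \esum_(i in G) (f i)%:E = (fine (\esum_(i in G) (f i)%:E))%:E.
Proof.
move=> f0 h; rewrite fineK // ge0_fin_numE //.
by apply: esum_ge0 => i /f0; rewrite lee_fin.
Qed.

Lemma summable_sums G f B :
  (forall s, uniq s -> [set` s] `<=` G -> \sum_(i <- s) `|f i| <= B) ->
  summable G (EFin \o f).
Proof. by move=> H; apply: le_lt_trans (esum_le_sums H) _; exact: ltry. Qed.

Lemma summable_le G f g : (forall i, G i -> `|f i| <= `|g i|) ->
  summable G (EFin \o g) -> summable G (EFin \o f).
Proof. by move=> fg; apply: le_lt_trans; apply: le_esum => i /fg; rewrite lee_fin. Qed.

Lemma summable_sum_le G f s : summable G (EFin \o f) -> uniq s -> [set` s] `<=` G ->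
  \sum_(i <- s) `|f i| <= fine (\esum_(i in G) (`|f i|)%:E).
Proof.
move=> h us sG; have := sum_le_esum (fun i => `|f i|) us sG.
by rewrite (esum_fineK _ h) // lee_fin.
Qed.

Lemma summableZ G f c : summable G (EFin \o f) -> summable G (EFin \o (fun i => c * f i)).
Proof.
move=> hf; apply: (summable_sums (B := `|c| * fine (\esum_(i in G) (`|f i|)%:E))).
move=> s us sG; under eq_bigr do rewrite normrM.
by rewrite -mulr_sumr ler_wpM2l // summable_sum_le.
Qed.

Lemma summable_sum G (r : seq I) (F : I -> I -> R) :
  (forall l, l \in r -> summable G (EFin \o F l)) ->
  summable G (EFin \o (fun i => \sum_(l <- r) F l i)).
Proof.
elim: r => [|l r IH] h.
  by apply: (summable_sums (B := 0)) => s _ _; rewrite big1 // => i _; rewrite big_nil normr0.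
have hl := h l (mem_head _ _).
have hr := IH (fun l' hl' => h l' ltac:(by rewrite in_cons hl' orbT)).
apply: (summable_le (g := fun i => F l i + \sum_(l' <- r) F l' i)) (summableD hl hr).
by move=> i _; rewrite big_cons.
Qed.

Lemma summable_fin G f s0 : uniq s0 ->
  (forall i, G i -> i \notin s0 -> f i = 0) -> summable G (EFin \o f).
Proof.
move=> us0 h0; apply: (summable_sums (B := \sum_(i <- s0) `|f i|)) => s us sG.
rewrite (bigID (fun i => i \in s0)) /= [X in _ + X]big1_seq ?addr0; last first.
  by move=> i /andP[ni /sG Gi]; rewrite h0 ?normr0.
rewrite -big_filter; apply: ler_sum_subset => //; first exact: filter_uniq.
by move=> i; rewrite mem_filter => /andP[].
Qed.

Lemma summable_mul G f g : summable G (EFin \o (fun i => f i ^+ 2)) ->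
  summable G (EFin \o (fun i => g i ^+ 2)) -> summable G (EFin \o (fun i => f i * g i)).
Proof.
move=> hf hg; have := summableD hf hg; apply: summable_le => i _.
rewrite /= [X in _ <= X]ger0_norm ?addr_ge0 ?sqr_ge0 // normrM.
rewrite -(real_normK (num_real (f i))) -(real_normK (num_real (g i))).
have := sqr_ge0 (`|f i| - `|g i|); rewrite sqrrB mulr2n; nra.
Qed.

Lemma is_usum_gsum G f : summable G (EFin \o f) -> is_usum G f (gsum G f).
Proof.
move=> h.
have max0_le (x : R) : Num.max x 0 <= `|x|.
  by rewrite maxr_absE subr0; have := ler_norm x; lra.
have max0_ge0 (x : R) : 0 <= Num.max x 0.
  by rewrite maxr_absE subr0; have := ler_norm (- x); rewrite normrN; lra.
have hp : (\esum_(i in G) (Num.max (f i) 0)%:E < +oo)%E.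
  by apply: le_lt_trans h; apply: le_esum => i _; rewrite lee_fin.
have hn : (\esum_(i in G) (Num.max (- f i) 0)%:E < +oo)%E.
  by apply: le_lt_trans h; apply: le_esum => i _; rewrite lee_fin -normrN.
have ep := esum_fineK (fun i _ => max0_ge0 (f i)) hp.
have en := esum_fineK (fun i _ => max0_ge0 (- f i)) hn.
move=> e e0; have e2 : 0 < e / 2 by rewrite divr_gt0.
have [s1 [us1 s1G H1]] := esum_sum_gt ep e2.
have [s2 [us2 s2G H2]] := esum_sum_gt en e2.
exists (s1 ++ s2); first by move=> i /=; rewrite mem_cat => /orP[/s1G|/s2G].
move=> s us sG sub.
have A1 : \sum_(i <- s1) Num.max (f i) 0 <= \sum_(i <- s) Num.max (f i) 0.
  by apply: ler_sum_subset => // i i1; apply: sub; rewrite mem_cat i1.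
have B1 : \sum_(i <- s2) Num.max (- f i) 0 <= \sum_(i <- s) Num.max (- f i) 0.
  by apply: ler_sum_subset => // i i1; apply: sub; rewrite mem_cat i1 orbT.
have A2 := sum_le_esum (fun i => Num.max (f i) 0) us sG.
have B2 := sum_le_esum (fun i => Num.max (- f i) 0) us sG.
rewrite ep lee_fin in A2; rewrite en lee_fin in B2.
have -> : \sum_(i <- s) f i =
    \sum_(i <- s) Num.max (f i) 0 - \sum_(i <- s) Num.max (- f i) 0.
  by rewrite -sumrB; apply: eq_bigr => i _; rewrite !maxr_absE !subr0 normrN; lra.
rewrite /gsum ler_norml; apply/andP; split; lra.
Qed.

Lemma is_usum_unique G f L1 L2 : is_usum G f L1 -> is_usum G f L2 -> L1 = L2.
Proof.
move=> h1 h2; apply/eqP; rewrite -subr_eq0 -normr_le0.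
apply/ler_addgt0Pr => e e0; rewrite add0r.
have e2 : 0 < e / 2 by rewrite divr_gt0.
have [s1 s1G H1] := h1 _ e2; have [s2 s2G H2] := h2 _ e2.
set s := undup (s1 ++ s2).
have sG : [set` s] `<=` G by move=> i /=; rewrite mem_undup mem_cat => /orP[/s1G|/s2G].
have := H1 s (undup_uniq _) sG (fun i hi => ltac:(by rewrite mem_undup mem_cat hi)).
have := H2 s (undup_uniq _) sG (fun i hi => ltac:(by rewrite mem_undup mem_cat hi orbT)).
rewrite !ler_norml => /andP[? ?] /andP[? ?]; apply/andP; split; lra.
Qed.

Lemma gsumE G f L : summable G (EFin \o f) -> is_usum G f L -> gsum G f = L.
Proof. by move=> h; apply: is_usum_unique; exact: is_usum_gsum. Qed.

Lemma gsum_ext G f g : (forall i, G i -> f i = g i) -> gsum G f = gsum G g.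
Proof. by move=> e; rewrite /gsum; congr (fine _ - fine _); apply: eq_esum => i /e ->. Qed.

Lemma is_usum_ext G f g L : (forall i, f i = g i) -> is_usum G f L -> is_usum G g L.
Proof. by move=> /funext ->. Qed.

Lemma is_usumD G f g L1 L2 : is_usum G f L1 -> is_usum G g L2 ->
  is_usum G (fun i => f i + g i) (L1 + L2).
Proof.
move=> h1 h2 e e0; have e2 : 0 < e / 2 by rewrite divr_gt0.
have [s1 s1G H1] := h1 _ e2; have [s2 s2G H2] := h2 _ e2.
exists (s1 ++ s2); first by move=> i /=; rewrite mem_cat => /orP[/s1G|/s2G].
move=> s us sG sub; rewrite big_split /=.
have := H1 s us sG (fun i hi => sub i ltac:(by rewrite mem_cat hi)).
have := H2 s us sG (fun i hi => sub i ltac:(by rewrite mem_cat hi orbT)).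
rewrite !ler_norml => /andP[? ?] /andP[? ?]; apply/andP; split; lra.
Qed.

Lemma is_usumZ G f L c : is_usum G f L -> is_usum G (fun i => c * f i) (c * L).
Proof.
move=> h e e0; have c1 : 0 < `|c| + 1 by have := normr_ge0 c; lra.
have [s0 s0G H] := h _ (divr_gt0 e0 c1); exists s0 => // s us sG sub.
rewrite -mulr_sumr -mulrBr normrM.
apply: (le_trans (ler_wpM2l (normr_ge0 c) (H s us sG sub))).
rewrite mulrA ler_pdivrMr // mulrDr mulr1 [e * _]mulrC lerDl; exact: ltW.
Qed.

Lemma is_usum_fin G f s0 : uniq s0 -> [set` s0] `<=` G ->
  (forall i, G i -> i \notin s0 -> f i = 0) -> is_usum G f (\sum_(i <- s0) f i).
Proof.
move=> us0 s0G h0 e e0; exists s0 => // s us sG sub.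
rewrite (sumr_subset_split f us0 us sub) [X in _ + X - _]big1_seq ?addr0.
  by rewrite subrr normr0 ltW.
by move=> i /andP[ni /sG Gi]; apply: h0.
Qed.

Lemma is_usum_sum G (r : seq I) (F : I -> I -> R) (L : I -> R) :
  (forall l, l \in r -> is_usum G (F l) (L l)) ->
  is_usum G (fun i => \sum_(l <- r) F l i) (\sum_(l <- r) L l).
Proof.
elim: r => [|l r IH] h.
  rewrite big_nil => e e0; exists [::] => // s _ _ _.
  by rewrite big1 ?subr0 ?normr0 ?ltW // => i _; rewrite big_nil.
rewrite big_cons; apply: is_usum_ext (is_usumD (h l (mem_head _ _))
   (IH (fun l' hl' => h l' ltac:(by rewrite in_cons hl' orbT)))) => i.
by rewrite big_cons.
Qed.

Lemma ler_is_usum G f L s : (forall i, G i -> 0 <= f i) -> is_usum G f L ->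
  uniq s -> [set` s] `<=` G -> \sum_(i <- s) f i <= L.
Proof.
move=> f0 h us sG; apply/ler_addgt0Pr => e e0.
have [s0 s0G H] := h _ e0.
set s' := undup (s ++ s0).
have s'G : [set` s'] `<=` G by move=> i /=; rewrite mem_undup mem_cat => /orP[/sG|/s0G].
have := H s' (undup_uniq _) s'G (fun i hi => ltac:(by rewrite mem_undup mem_cat hi orbT)).
rewrite ler_norml => /andP[_ H2].
suff : \sum_(i <- s) f i <= \sum_(i <- s') f i by lra.
apply: ler_sum_subset => // [|i hi|i /s'G]; [exact: undup_uniq| |exact: f0].
by rewrite mem_undup mem_cat hi.
Qed.

Lemma is_usum_ge0 G f L : (forall i, G i -> 0 <= f i) -> is_usum G f L -> 0 <= L.
Proof.
by move=> f0 h; have := ler_is_usum (s := [::]) f0 h isT; rewrite big_nil; apply.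
Qed.

End UnorderedSums.

Section RealInequalities.
Context {R : realType}.

Lemma ler_of_small_excess (x y K : R) : 0 <= K ->
  (forall eta, 0 < eta -> eta <= 1 -> x <= y + eta * K) -> x <= y.
Proof.
move=> K0 H; apply/ler_addgt0Pr => e e0.
have d0 : 0 < K + 1 + e by lra.
have h1 : 0 < e / (K + 1 + e) by rewrite divr_gt0.
have h2 : e / (K + 1 + e) <= 1 by rewrite ler_pdivrMr // mul1r; lra.
apply: (le_trans (H _ h1 h2)); rewrite lerD2l mulrAC ler_pdivrMr //.
rewrite mulrDr; nra.
Qed.

Lemma sqr_le_perturb (a g B eta : R) : `|g - a| <= eta -> 0 < eta -> eta <= 1 ->
  a ^+ 2 <= B -> g ^+ 2 <= a ^+ 2 + eta * (2 * (1 + B) + 1).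
Proof.
move=> hd e0 e1 hB.
have ha : `|a| <= 1 + B.
  have := real_normK (num_real a); have := normr_ge0 a; nra.
set d := g - a; have -> : g = a + d by rewrite /d addrC subrK.
have h1 : a * d <= `|a| * `|d| by rewrite -normrM ler_norm.
have h2 : `|a| * `|d| <= (1 + B) * eta by apply: ler_pM.
have h3 : d ^+ 2 <= eta by rewrite -(real_normK (num_real d)); have := normr_ge0 d; nra.
rewrite sqrrD mulr2n; nra.
Qed.

Lemma oppr_mul_le (x y e : R) : 0 < e -> - (x * y) <= (e * x ^+ 2 + y ^+ 2 / e) / 2.
Proof.
move=> e0; set w := y ^+ 2 / e.
have hw : w * e = y ^+ 2 by rewrite /w divfK // gt_eqF.
have := sqr_ge0 (e * x + y); rewrite sqrrD mulr2n => hs.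
nra.
Qed.

Lemma ratio_lower_bound (c0 CX p V m : R) : 0 < c0 -> 0 < CX -> c0 <= p ->
  0 < V -> V <= CX ^+ 2 * m -> c0 / CX * (1 / Num.sqrt m) <= `|p / Num.sqrt V|.
Proof.
move=> c00 CX0 hp V0 hV.
have m0 : 0 < m by move: hV; have := exprn_gt0 2 CX0; nra.
have u0 : 0 < Num.sqrt V by rewrite sqrtr_gt0.
have w0 : 0 < Num.sqrt m by rewrite sqrtr_gt0.
have huw : Num.sqrt V <= CX * Num.sqrt m.
  rewrite -(ger0_norm (ltW CX0)) -sqrtr_sqr -sqrtrM ?sqr_ge0 // ler_sqrt //.
  by rewrite mulr_ge0 ?sqr_ge0 // ltW.
rewrite ger0_norm; last by rewrite divr_ge0 // ltW; lra.
rewrite mul1r -mulrA -invfM ler_pdivrMr ?mulr_gt0 //.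
have t0 : 0 <= p / Num.sqrt V by rewrite divr_ge0 // ltW; lra.
have tu : p / Num.sqrt V * Num.sqrt V = p by rewrite divfK // gt_eqF.
have := ler_wpM2l t0 huw; lra.
Qed.

End RealInequalities.

Section InfiniteMatrices.
Context {R : realType} {I : choiceType}.
Implicit Types (G : set I) (K P : I -> I -> R) (v c : I -> R) (F s : seq I).

Lemma mx_positive_diag_ge0 G P b : mx_positive G P -> G b -> 0 <= P b b.
Proof.
move=> hP Gb; have := hP [:: b] isT (fun i => ltac:(by rewrite mem_seq1 => /eqP ->)) (fun _ => 1).
by rewrite !big_seq1 mul1r mulr1.
Qed.

Lemma op_bounded_col_sqr G K L j s : op_bounded G K L -> G j -> uniq s -> [set` s] `<=` G ->
  \sum_(i <- s) K i j ^+ 2 <= L ^+ 2.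
Proof.
move=> hK Gj us sG; set F := undup (j :: s).
have FG : [set` F] `<=` G by move=> i /=; rewrite mem_undup in_cons => /orP[/eqP->|/sG].
have jF : j \in F by rewrite mem_undup mem_head.
have := hK F (undup_uniq _) FG (fun j' => (j' == j)%:R).
have -> : \sum_(j' <- F) ((j' == j)%:R : R) ^+ 2 = 1.
  rewrite (eq_bigr (fun j' => 1 * (j' == j)%:R)).
    exact: (sum_kroneckerr (fun _ => 1) (undup_uniq _) jF).
  by move=> j' _; case: (j' == j); rewrite ?expr2 ?mul1r ?mulr0 ?mulr1.
rewrite mulr1; under eq_bigr do rewrite (sum_kroneckerr (K _) (undup_uniq _) jF).
apply: le_trans; apply: ler_sum_subset => //; [exact: undup_uniq| |by move=> i _; exact: sqr_ge0].
by move=> i hi; rewrite mem_undup in_cons hi orbT.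
Qed.

Lemma op_bounded_diag G K L b : op_bounded G K L -> G b -> K b b <= `|L|.
Proof.
move=> hK Gb; have := hK [:: b] isT (fun i => ltac:(by rewrite mem_seq1 => /eqP ->)) (fun _ => 1).
rewrite !big_seq1 mulr1 expr1n mulr1 -(real_normK (num_real L)) => h.
have := normr_ge0 L; nra.
Qed.

Lemma is_usum_common_support G F (f : I -> I -> R) (L : I -> R) e : 0 < e ->
  [set` F] `<=` G -> (forall i, i \in F -> is_usum G (f i) (L i)) ->
  exists J, [/\ uniq J, [set` J] `<=` G, {subset F <= J} &
    forall i, i \in F -> `|\sum_(j <- J) f i j - L i| <= e].
Proof.
move=> e0 FG hf.
have : forall i, exists s0 : seq I, i \in F -> [set` s0] `<=` G /\
    forall s, uniq s -> [set` s] `<=` G -> {subset s0 <= s} -> `|\sum_(j <- s) f i j - L i| <= e.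
  move=> i; case: (boolP (i \in F)) => iF; last by exists [::].
  by have [s0 s0G H] := hf i iF _ e0; exists s0.
move=> /choice[sf hsf]; set J := undup (F ++ flatten (map sf F)).
have JG : [set` J] `<=` G.
  move=> j /=; rewrite mem_undup mem_cat => /orP[/FG //|/flatten_mapP[i iF]].
  by case: (hsf i iF) => + _; apply.
exists J; split => //; [exact: undup_uniq | by move=> i iF; rewrite mem_undup mem_cat iF |].
move=> i iF; case: (hsf i iF) => _; apply => //; first exact: undup_uniq.
by move=> j js; rewrite mem_undup mem_cat; apply/orP; right; apply/flatten_mapP; exists i.
Qed.

Lemma op_bounded_gsum G K L F v V : op_bounded G K L -> uniq F -> [set` F] `<=` G ->
  (forall i, i \in F -> summable G (EFin \o (fun j => K i j * v j))) ->
  is_usum G (fun j => v j ^+ 2) V ->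
  \sum_(i <- F) (gsum G (fun j => K i j * v j)) ^+ 2 <= L ^+ 2 * V.
Proof.
move=> hK uF FG hs hV; set B := L ^+ 2 * V.
have B0 : 0 <= B by rewrite mulr_ge0 ?sqr_ge0 // (is_usum_ge0 _ hV) // => i _; exact: sqr_ge0.
apply: (ler_of_small_excess (K := (size F)%:R * (2 * (1 + B) + 1))).
  by rewrite mulr_ge0 //; lra.
move=> eta e0 e1.
have [J [uJ JG FJ hJ]] := is_usum_common_support e0 FG (fun i iF => is_usum_gsum (hs i iF)).
set a := fun i => \sum_(j <- J) K i j * v j.
have hFa : \sum_(i <- F) a i ^+ 2 <= B.
  apply: le_trans (_ : \sum_(i <- J) a i ^+ 2 <= B).
    by apply: ler_sum_subset => // i _; exact: sqr_ge0.
  apply: le_trans (hK J uJ JG v) _; rewrite ler_wpM2l ?sqr_ge0 //.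
  by apply: ler_is_usum hV uJ JG => i _; exact: sqr_ge0.
apply: le_trans (_ : \sum_(i <- F) (a i ^+ 2 + eta * (2 * (1 + B) + 1)) <= _).
  rewrite big_seq [X in _ <= X]big_seq; apply: ler_sum => i iF.
  apply: sqr_le_perturb => //; first by rewrite distrC; exact: hJ.
  apply: le_trans hFa; apply: (ler_sum_mem (f := fun i => a i ^+ 2)) => // j _; exact: sqr_ge0.
rewrite big_split /= sumr_const_size; apply: lerD => //; lra.
Qed.

Lemma quad_form_shift F P c b t : uniq F -> b \in F ->
  \sum_(i <- F) \sum_(j <- F) (c i - t * (i == b)%:R) * P i j * (c j - t * (j == b)%:R)
  = \sum_(i <- F) \sum_(j <- F) c i * P i j * c j - t * \sum_(j <- F) P b j * c j
    - t * \sum_(i <- F) c i * P i b + t ^+ 2 * P b b.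
Proof.
move=> uF bF; set d := fun i => c i - t * (i == b)%:R.
have row i : \sum_(j <- F) d i * P i j * d j
    = d i * \sum_(j <- F) P i j * c j - t * (d i * P i b).
  rewrite (eq_bigr (fun j => d i * (P i j * c j) - t * ((d i * P i j) * (j == b)%:R))).
    by rewrite big_split /= sumrN -mulr_sumr -mulr_sumr (sum_kroneckerr (fun j => d i * P i j)).
  by move=> j _; rewrite /d; ring.
rewrite (eq_bigr _ (fun i _ => row i)) big_split /= sumrN.
set S := fun i => \sum_(j <- F) P i j * c j.
have -> : \sum_(i <- F) d i * S i = \sum_(i <- F) c i * S i - t * S b.
  rewrite (eq_bigr (fun i => c i * S i - t * ((i == b)%:R * S i))); last first.
    by move=> i _; rewrite /d; ring.
  by rewrite big_split /= sumrN -mulr_sumr sum_kroneckerl.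
have -> : \sum_(i <- F) t * (d i * P i b) = t * \sum_(i <- F) c i * P i b - t ^+ 2 * P b b.
  rewrite (eq_bigr (fun i => t * (c i * P i b) - t ^+ 2 * ((i == b)%:R * P i b))).
    by rewrite big_split /= sumrN -!mulr_sumr sum_kroneckerl.
  by move=> i _; rewrite /d; ring.
have -> : \sum_(i <- F) \sum_(j <- F) c i * P i j * c j = \sum_(i <- F) c i * S i.
  by apply: eq_bigr => i _; rewrite /S mulr_sumr; apply: eq_bigr => j _; rewrite mulrA.
rewrite /S /=; lra.
Qed.

Lemma mx_positive_cauchy_schwarz G P F c b : mx_symmetric G P -> mx_positive G P ->
  uniq F -> [set` F] `<=` G -> b \in F ->
  (\sum_(j <- F) P b j * c j) ^+ 2 <= (\sum_(i <- F) \sum_(j <- F) c i * P i j * c j) * P b b.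
Proof.
move=> hPs hPp uF FG bF; set a := \sum_(j <- F) P b j * c j.
set q := \sum_(i <- F) \sum_(j <- F) c i * P i j * c j; set p := P b b.
have p0 : 0 <= p by apply: mx_positive_diag_ge0 hPp (FG b bF).
have hpsd t : 0 <= q - 2 * t * a + t ^+ 2 * p.
  have := hPp F uF FG (fun i => c i - t * (i == b)%:R); rewrite quad_form_shift //.
  have -> : \sum_(i <- F) c i * P i b = a.
    by rewrite /a; apply: eq_big_seq => i iF; rewrite (hPs _ _ (FG i iF) (FG b bF)) mulrC.
  rewrite -/a -/q -/p; lra.
have [pz|pnz] := eqVneq p 0.
  rewrite pz mulr0; have [->|anz] := eqVneq a 0; first by rewrite expr0n.
  have := hpsd ((q + 1) / (2 * a)).
  have -> : 2 * ((q + 1) / (2 * a)) * a = q + 1 by field.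
  rewrite pz; lra.
have pp : 0 < p by rewrite lt_def pnz p0.
have := hpsd (a / p).
have -> : q - 2 * (a / p) * a + (a / p) ^+ 2 * p = (q * p - a ^+ 2) / p by field.
by move=> h; have := mulr_ge0 h p0; rewrite divfK //; lra.
Qed.

Section PositiveSquareRoot.
Variables (G : set I) (P : I -> I -> R) (Lp : R).
Hypotheses (hPb : op_bounded G P Lp) (hPs : mx_symmetric G P) (hPp : mx_positive G P).

Lemma summable_col_sqr l : G l -> summable G (EFin \o (fun m => P m l ^+ 2)).
Proof.
move=> Gl; apply: (summable_sums (B := Lp ^+ 2)) => s us sG.
under eq_bigr do rewrite ger0_norm ?sqr_ge0 //.
exact: (op_bounded_col_sqr hPb Gl us sG).
Qed.

Lemma summable_row_sqr i : G i -> summable G (EFin \o (fun m => P i m ^+ 2)).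
Proof.
move=> Gi; apply: summable_le (summable_col_sqr Gi) => m Gm.
by rewrite (hPs Gi Gm).
Qed.

Section Inverse.
Variables (c : I -> R) (b : I).
Hypotheses (Gb : G b) (hc : summable G (EFin \o (fun m => c m ^+ 2)))
  (hPc : forall i, G i -> gsum G (fun m => P i m * c m) = (i == b)%:R).

Lemma inverse_truncation_sqr F : uniq F -> [set` F] `<=` G ->
  \sum_(i <- F) ((i == b)%:R - \sum_(j <- F) P i j * c j) ^+ 2 <=
  Lp ^+ 2 * (gsum G (fun m => c m ^+ 2) - \sum_(i <- F) c i ^+ 2).
Proof.
move=> uF FG; set K := gsum G _.
set w := fun m => if m \in F then 0 else c m.
set cF := fun m => if m \in F then c m ^+ 2 else 0.
have cF0 i : G i -> i \notin F -> cF i = 0 by move=> _ ni; rewrite /cF (negPf ni).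
have hcF : is_usum G cF (\sum_(i <- F) c i ^+ 2).
  have -> : \sum_(i <- F) c i ^+ 2 = \sum_(i <- F) cF i.
    by apply: eq_big_seq => i iF; rewrite /cF iF.
  exact: is_usum_fin.
have hw : is_usum G (fun m => w m ^+ 2) (K - \sum_(i <- F) c i ^+ 2).
  have := is_usumD (is_usum_gsum hc) (is_usumZ (-1) hcF); rewrite mulN1r.
  apply: is_usum_ext => m; rewrite /cF /w mulN1r.
  by case: (m \in F); rewrite ?subrr ?expr2 ?mul0r ?subr0.
have hw2 : summable G (EFin \o (fun m => w m ^+ 2)).
  apply: summable_le hc => m _; rewrite /w; case: (m \in F) => //.
  by rewrite expr2 mul0r normr0 normr_ge0.
have hrow i : G i -> summable G (EFin \o (fun j => P i j * w j)).
  by move=> Gi; apply: summable_mul (summable_row_sqr Gi) hw2.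
apply: le_trans (op_bounded_gsum hPb uF FG (fun i iF => hrow i (FG i iF)) hw).
rewrite le_eqVlt; apply/orP; left; apply/eqP; apply: eq_big_seq => i iF; congr (_ ^+ 2).
rewrite -(hPc (FG i iF)) (_ : gsum G _ = gsum G (fun j => P i j * w j) +
  \sum_(j <- F) P i j * c j) ?addrK //.
apply: gsumE; first exact: summable_mul (summable_row_sqr (FG i iF)) hc.
set f1 := fun j => P i j * (if j \in F then c j else 0).
have h1 : is_usum G f1 (\sum_(j <- F) P i j * c j).
  have -> : \sum_(j <- F) P i j * c j = \sum_(j <- F) f1 j.
    by apply: eq_big_seq => j jF; rewrite /f1 jF.
  by apply: is_usum_fin => // j _ nj; rewrite /f1 (negPf nj) mulr0.
apply: is_usum_ext (is_usumD (is_usum_gsum (hrow i (FG i iF))) h1) => j.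
by rewrite /f1 /w; case: (j \in F); rewrite ?mulr0 ?add0r ?addr0.
Qed.

(* [P] restricted to a large finite window [F] almost inverts [c]: [a] is close to [(P c) b = 1]
   and the quadratic form [q] of [c] is close to [<P c, c> = c b]. *)
Lemma inverse_window_estimate eps : 0 < eps -> eps <= 1 ->
  (1 - eps) ^+ 2 <= (c b + eps * ((gsum G (fun m => c m ^+ 2) + Lp ^+ 2) / 2)) * P b b.
Proof.
set K := gsum G _; set Kc := (K + _) / 2 => e0 e1.
have hK := is_usum_gsum hc.
have e2 : 0 < eps ^+ 2 by rewrite exprn_gt0.
have hb : is_usum G (fun m => P b m * c m) 1.
  by have := is_usum_gsum (summable_mul (summable_row_sqr Gb) hc); rewrite hPc // eqxx.
have [s1 s1G H1] := hb _ e0; have [s2 s2G H2] := hK _ e2.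
set F := undup (b :: s1 ++ s2).
have FG : [set` F] `<=` G.
  by move=> i /=; rewrite mem_undup in_cons mem_cat => /or3P[/eqP->|/s1G|/s2G].
have uF : uniq F := undup_uniq _.
have bF : b \in F by rewrite mem_undup mem_head.
have ha := H1 F uF FG (fun i hi => ltac:(by rewrite mem_undup in_cons mem_cat hi orbT)).
have hs2 := H2 F uF FG (fun i hi => ltac:(by rewrite mem_undup in_cons mem_cat hi !orbT)).
set a := \sum_(j <- F) P b j * c j in ha.
set T := fun i => (i == b)%:R - \sum_(j <- F) P i j * c j.
have hT : \sum_(i <- F) T i ^+ 2 <= Lp ^+ 2 * eps ^+ 2.
  apply: le_trans (inverse_truncation_sqr uF FG) _; rewrite ler_wpM2l ?sqr_ge0 //.
  by move: hs2; rewrite ler_norml => /andP[? ?]; lra.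
set q := \sum_(i <- F) \sum_(j <- F) c i * P i j * c j.
have hq : q = c b - \sum_(i <- F) c i * T i.
  rewrite /q (eq_bigr (fun i => c i * (i == b)%:R - c i * T i)); last first.
    move=> i _; rewrite /T mulrBr opprB addrC subrK mulr_sumr.
    by apply: eq_bigr => j _; rewrite mulrA.
  by rewrite sumrB sum_kroneckerr.
have hcT : - \sum_(i <- F) c i * T i <= eps * Kc.
  rewrite -sumrN; apply: le_trans
    (_ : \sum_(i <- F) (eps * c i ^+ 2 + T i ^+ 2 / eps) / 2 <= _).
    by apply: ler_sum => i _; apply: oppr_mul_le.
  rewrite -mulr_suml big_split /= -mulr_sumr -mulr_suml.
  have hX : (\sum_(i <- F) T i ^+ 2) / eps <= Lp ^+ 2 * eps.
    by rewrite ler_pdivrMr // -mulrA -expr2.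
  have hY : eps * \sum_(i <- F) c i ^+ 2 <= eps * K.
    rewrite ler_wpM2l ?(ltW e0) //.
    by apply: (ler_is_usum _ hK uF FG) => i _; exact: sqr_ge0.
  rewrite /Kc; lra.
have hcs := mx_positive_cauchy_schwarz c hPs hPp uF FG bF; rewrite -/a -/q in hcs.
have p0 := mx_positive_diag_ge0 hPp Gb.
have : (1 - eps) ^+ 2 <= a ^+ 2 by move: ha; rewrite ler_norml => /andP[? ?]; nra.
have : q * P b b <= (c b + eps * Kc) * P b b by rewrite ler_wpM2r // hq; lra.
lra.
Qed.

Lemma inverse_diag_ge1 : 1 <= c b * P b b.
Proof.
set Kc := (gsum G (fun m => c m ^+ 2) + Lp ^+ 2) / 2.
have Kc0 : 0 <= Kc.
  rewrite divr_ge0 // addr_ge0 ?sqr_ge0 //.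
  by apply: is_usum_ge0 (is_usum_gsum hc) => i _; exact: sqr_ge0.
have p0 := mx_positive_diag_ge0 hPp Gb.
apply: (ler_of_small_excess (K := 2 + Kc * P b b)); first by rewrite addr_ge0 // mulr_ge0.
move=> eta e0 e1; have := inverse_window_estimate (_ : 0 < eta / 2) (_ : eta / 2 <= 1).
have := mulr_ge0 (ltW e0) (mulr_ge0 Kc0 p0); rewrite -/Kc.
by move=> h /(_ ltac:(by rewrite divr_gt0) ltac:(lra)); nra.
Qed.

End Inverse.

Section ColumnOfInverse.
Variables (M : I -> I -> R) (F0 : seq I) (b : I).
Hypotheses (Gb : G b) (uF0 : uniq F0) (F0G : [set` F0] `<=` G) (bF0 : b \in F0)
  (hM0 : forall l, G l -> l \notin F0 -> M l b = 0)
  (hPPM : forall i, G i -> mxmul G (mxmul G P P) M i b = (i == b)%:R).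

Let c m := \sum_(l <- F0) P m l * M l b.

Lemma summable_mul_cols l l' : G l -> G l' ->
  summable G (EFin \o (fun m => P m l * P m l')).
Proof. by move=> Gl Gl'; apply: summable_mul; apply: summable_col_sqr. Qed.

Lemma mxmul_sqr_col_fin i : G i -> \sum_(l <- F0) mxmul G P P i l * M l b = (i == b)%:R.
Proof.
move=> Gi; rewrite -(hPPM Gi); apply/esym.
have h0 l : G l -> l \notin F0 -> mxmul G P P i l * M l b = 0 by move=> Gl nl; rewrite hM0 ?mulr0.
by apply: gsumE; [exact: summable_fin uF0 h0 | exact: is_usum_fin uF0 F0G h0].
Qed.

Lemma summable_sqr_PMcol : summable G (EFin \o (fun m => c m ^+ 2)).
Proof.
apply: (summable_le
  (g := fun m => \sum_(l <- F0) \sum_(l' <- F0) M l b * M l' b * (P m l * P m l'))).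
  move=> m _; rewrite le_eqVlt; apply/orP; left; apply/eqP; congr `|_|; rewrite expr2 /c mulr_suml.
  by apply: eq_bigr => l _; rewrite mulr_sumr; apply: eq_bigr => l' _; ring.
apply: summable_sum => l hl; apply: summable_sum => l' hl'.
by apply: summableZ; apply: summable_mul_cols; apply: F0G.
Qed.

Lemma gsum_mul_PMcol i : G i -> gsum G (fun m => P i m * c m) = (i == b)%:R.
Proof.
move=> Gi; rewrite -(mxmul_sqr_col_fin Gi).
have e m : \sum_(l <- F0) M l b * (P i m * P m l) = P i m * c m.
  by rewrite /c mulr_sumr; apply: eq_bigr => l _; ring.
have hs l : l \in F0 -> summable G (EFin \o (fun m => P i m * P m l)).
  move=> hl; apply: summable_mul; first exact: summable_row_sqr.
  by apply: summable_col_sqr; exact: F0G.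
apply: gsumE.
  by apply: summable_mul (summable_row_sqr Gi) summable_sqr_PMcol.
rewrite (eq_bigr (fun l => M l b * mxmul G P P i l)); last by move=> l _; rewrite mulrC.
apply: is_usum_ext e _; apply: is_usum_sum => l hl; apply: is_usumZ.
exact: is_usum_gsum (hs l hl).
Qed.

Lemma gsum_sqr_PMcol : gsum G (fun m => c m ^+ 2) = M b b.
Proof.
have e m : \sum_(l <- F0) \sum_(l' <- F0) M l b * M l' b * (P m l * P m l') = c m ^+ 2.
  rewrite expr2 /c mulr_suml; apply: eq_bigr => l _; rewrite mulr_sumr.
  by apply: eq_bigr => l' _; ring.
apply: gsumE; first exact: summable_sqr_PMcol.
have -> : M b b = \sum_(l <- F0) \sum_(l' <- F0) M l b * M l' b * mxmul G P P l l'.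
  rewrite -(sum_kroneckerr (fun l => M l b) uF0 bF0); apply: eq_big_seq => l hl.
  rewrite -(mxmul_sqr_col_fin (F0G hl)) mulr_sumr; apply: eq_bigr => l' _; ring.
apply: is_usum_ext e _; apply: is_usum_sum => l hl; apply: is_usum_sum => l' hl'.
apply: is_usumZ; rewrite /mxmul (gsum_ext (g := fun m => P m l * P m l')).
  by apply: is_usum_gsum; apply: summable_mul_cols; apply: F0G.
by move=> m Gm; rewrite (hPs (F0G hl) Gm).
Qed.

Lemma inv_sqrt_diag_ge Lam : op_bounded G M Lam -> 1 / (1 + `|Lam|) <= P b b.
Proof.
move=> hM.
have hcb : c b ^+ 2 <= M b b.
  rewrite -gsum_sqr_PMcol; have := is_usum_gsum summable_sqr_PMcol.
  move=> /(ler_is_usum (s := [:: b]) (fun i _ => sqr_ge0 (c i))) /(_ isT); rewrite big_seq1.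
  by apply=> i /=; rewrite mem_seq1 => /eqP ->.
have hMbb := op_bounded_diag hM Gb.
have := inverse_diag_ge1 Gb summable_sqr_PMcol gsum_mul_PMcol.
have := mx_positive_diag_ge0 hPp Gb; have := normr_ge0 Lam.
rewrite ler_pdivrMr; last by have := normr_ge0 Lam; lra.
nra.
Qed.

End ColumnOfInverse.
End PositiveSquareRoot.
End InfiniteMatrices.

Section Metric.
Context {R : realType} {T : Type}.
Variable d : T -> T -> R.
Hypothesis Hmetric : is_metric d.

Lemma dist_self z : d z z = 0.
Proof. by case: Hmetric => _ [h _]; apply/h. Qed.

Lemma distC z w : d z w = d w z.
Proof. by case: Hmetric => _ [_ [h _]]. Qed.

Lemma dist_triangle z w u : d z u <= d z w + d w u.
Proof. by case: Hmetric => _ [_ [_ h]]. Qed.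

Lemma dball_center z r : 0 < r -> dball d z r z.
Proof. by rewrite /dball /= dist_self. Qed.

Lemma dball_sub z r r' : r <= r' -> dball d z r `<=` dball d z r'.
Proof. by move=> h w; rewrite /dball /= => /lt_le_trans; apply. Qed.

End Metric.

Section MetricMeasure.
Context {R : realType} {dT : measure_display} {T : measurableType dT}.
Variables (d : T -> T -> R) (mu : {measure set T -> \bar R}).
Hypotheses (Hmetric : is_metric d)
  (Hborel : forall U : set T, dopen d U -> measurable U)
  (Hball_pos : forall (z : T) (r : R), 0 < r -> (0 < mu (dball d z r))%E)
  (Hball_fin : forall (z : T) (r : R), (mu (dball d z r) < +oo)%E).

Lemma measurable_dball z r : measurable (dball d z r).
Proof.
apply: Hborel => w; rewrite /dball /= => hw; exists (r - d z w); first by rewrite subr_gt0.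
by move=> u; rewrite /dball /= => hu; have := dist_triangle Hmetric z w u; lra.
Qed.

Lemma VolE z r : mu (dball d z r) = (Vol mu d z r)%:E.
Proof. by rewrite /Vol fineK // ge0_fin_numE. Qed.

Lemma Vol_gt0 z r : 0 < r -> 0 < Vol mu d z r.
Proof. by move=> r0; have := Hball_pos z r0; rewrite VolE lte_fin. Qed.

Lemma le_Vol z w r r' : dball d z r `<=` dball d w r' -> Vol mu d z r <= Vol mu d w r'.
Proof.
move=> hs; rewrite -lee_fin -!VolE.
exact: le_measure (mem_set (measurable_dball _ _)) (mem_set (measurable_dball _ _)) hs.
Qed.

Lemma Vol_le_measure z r (E : set T) : measurable E -> dball d z r `<=` E ->
  ((Vol mu d z r)%:E <= mu E)%E.
Proof.
by move=> mE hs; rewrite -VolE; exact: le_measure (mem_set (measurable_dball _ _)) (mem_set mE) hs.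
Qed.

Lemma sum_Vol_disjoint_le (J : choiceType) (L : seq J) (y : J -> T) (rho r : R) z :
  uniq L -> (forall l l', l \in L -> l' \in L -> l <> l' -> 2 * rho <= d (y l) (y l')) ->
  (forall l, l \in L -> d z (y l) + rho <= r) ->
  \sum_(l <- L) Vol mu d (y l) rho <= Vol mu d z r.
Proof.
move=> uL hsep hin; set D := fun l => dball d (y l) rho.
have tr : trivIset [set` L] D.
  move=> l l' hl hl' [w [h1 h2]]; apply: contrapT => ne.
  have := hsep l l' hl hl' ne; move: h1 h2; rewrite /D /dball /= => h1 h2.
  by have := dist_triangle Hmetric (y l) w (y l'); rewrite (distC Hmetric w (y l')); lra.
have mD l : [set` L] l -> measurable (D l) by move=> _; exact: measurable_dball.
have hsub : \bigcup_(l in [set` L]) D l `<=` dball d z r.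
  move=> w [l hl]; rewrite /D /dball /= => hw.
  by have := dist_triangle Hmetric z (y l) w; have := hin l hl; lra.
rewrite -lee_fin -sumEFin -VolE; under eq_bigr do rewrite -VolE.
rewrite fsbig_seq // -(measure_fin_bigcup mu (finite_seq L) tr mD).
exact: le_measure (mem_set (fin_bigcup_measurable (finite_seq L) mD))
  (mem_set (measurable_dball _ _)) hsub.
Qed.

Variable CX : R.
Hypothesis Hdoubling : forall (z : T) (r : R), 0 < r ->
  (mu (dball d z (2 * r)) <= CX%:E * mu (dball d z r))%E.

Lemma Vol_double z r : 0 < r -> Vol mu d z (2 * r) <= CX * Vol mu d z r.
Proof. by move=> r0; have := Hdoubling z r0; rewrite !VolE -EFinM lee_fin. Qed.

Lemma doubling_const_gt0 (z : T) : 0 < CX.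
Proof.
have h1 := Vol_gt0 z ltr01.
have h2 : 0 < Vol mu d z (2 * 1) by apply: Vol_gt0; rewrite mulr_gt0.
by have := Vol_double z ltr01; nra.
Qed.

Lemma Vol_double_iter z r n : 0 < r -> Vol mu d z (2 ^+ n * r) <= CX ^+ n * Vol mu d z r.
Proof.
move=> r0; have CX0 := doubling_const_gt0 z.
elim: n => [|n IH]; first by rewrite !expr0 !mul1r.
have r1 : 0 < 2 ^+ n * r by rewrite mulr_gt0 // exprn_gt0.
rewrite exprS -mulrA; apply: le_trans (Vol_double z r1) _.
by rewrite exprS -mulrA ler_wpM2l // ltW.
Qed.

(* Each of the disjoint balls of radius r/16 has volume comparable to that of the ball
   of radius 17r containing them all, so there are at most CX^10 of them. *)
Lemma separated_near_finite (J : choiceType) (S : set J) (y : J -> T) (r : R) (z : T) :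
  0 < r -> (forall l l', S l -> S l' -> l <> l' -> r / 8 <= d (y l) (y l')) ->
  finite_set [set l | S l /\ d z (y l) < 16 * r].
Proof.
move=> r0 hsep; set S' := [set l | _ /\ _].
have CX0 := doubling_const_gt0 z.
apply: contrapT => infS.
have [B BS Bn] := infinite_set_fset (Num.truncn (CX ^+ 10)).+1 infS.
set L : seq J := enum_fset B.
have LS l : l \in L -> S' l by move=> hl; apply: BS.
set V17 := Vol mu d z (17 * r).
have V17p : 0 < V17 by apply: Vol_gt0; rewrite mulr_gt0.
have hsum : \sum_(l <- L) Vol mu d (y l) (r / 16) <= V17.
  apply: sum_Vol_disjoint_le; first exact: fset_uniq.
    by move=> l l' hl hl' ne; have := hsep l l' (LS l hl).1 (LS l' hl').1 ne; lra.
  by move=> l hl; have := (LS l hl).2; lra.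
have hbig l : l \in L -> V17 <= CX ^+ 10 * Vol mu d (y l) (r / 16).
  move=> hl; apply: le_trans (@Vol_double_iter (y l) (r / 16) 10 ltac:(by rewrite divr_gt0)).
  apply: le_Vol => w; rewrite /dball /= => hw.
  have := dist_triangle Hmetric (y l) z w; rewrite (distC Hmetric (y l) z); have := (LS l hl).2.
  have -> : (2 : R) ^+ 10 * (r / 16) = 64 * r by rewrite !exprS expr0; lra.
  lra.
have : V17 * (size L)%:R <= CX ^+ 10 * V17.
  rewrite -sumr_const_size.
  apply: le_trans (_ : \sum_(l <- L) CX ^+ 10 * Vol mu d (y l) (r / 16) <= _).
    by rewrite big_seq [X in _ <= X]big_seq; apply: ler_sum => l hl; exact: hbig.
  by rewrite -mulr_sumr ler_wpM2l // exprn_ge0 // ltW.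
have hn : (Num.truncn (CX ^+ 10)).+1%:R <= (size L)%:R :> R by rewrite ler_nat.
have := truncnS_gt (CX ^+ 10).
rewrite [V17 * _]mulrC => h1 h2.
have : (size L)%:R <= CX ^+ 10 :> R by rewrite -(ler_pM2r V17p).
lra.
Qed.

End MetricMeasure.

Section Splines.
Context {R : realType} {T : Type} {I : choiceType}.
Variables (d : T -> T -> R) (delta : R) (A : int -> set I) (x : I -> T)
  (s : int -> I -> T -> R).
Hypotheses (Hsind : forall (k : int) (a : I) (z : T), A k a ->
    \1_(dball d (x a) (delta ^ k / 8)) z <= s k a z <= \1_(dball d (x a) (8 * delta ^ k)) z)
  (Hsoff : forall (k : int) (a b : I), A k a -> A k b -> a <> b -> s k a (x b) = 0)
  (Hspart : forall (k : int) (z : T), (\esum_(a in A k) (s k a z)%:E = 1)%E).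

Lemma spline_ge0 k a z : A k a -> 0 <= s k a z.
Proof. by move=> /(Hsind z) /andP[+ _]; apply: le_trans; rewrite indicE. Qed.

Lemma spline_eq0_far k a z : A k a -> 8 * delta ^ k <= d (x a) z -> s k a z = 0.
Proof.
move=> Aa far; apply/le_anti; rewrite spline_ge0 // andbT.
have /andP[_] := Hsind z Aa; rewrite indicE memNset //.
by rewrite /dball /= => /lt_le_trans /(_ far); rewrite ltxx.
Qed.

Lemma spline_eq1 k a z : A k a -> dball d (x a) (delta ^ k / 8) z -> s k a z = 1.
Proof.
move=> Aa hz; have /andP[h1 h2] := Hsind z Aa.
rewrite indicE mem_set // in h1; apply/le_anti; rewrite h1 andbT.
by apply: le_trans h2 _; rewrite indicE; case: (_ \in _).
Qed.

Lemma dyadic_points_separated k a b : A k a -> A k b -> a <> b -> delta ^ k / 8 <= d (x a) (x b).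
Proof.
move=> Aa Ab ab; rewrite leNgt; apply/negP => near.
by have := spline_eq1 Aa near; rewrite Hsoff //; apply/eqP; rewrite eq_sym oner_eq0.
Qed.

Lemma spline_eq0_near_other k a b z :
  A k a -> A k b -> b <> a -> dball d (x a) (delta ^ k / 8) z -> s k b z = 0.
Proof.
move=> Aa Ab ba hz.
have u : uniq [:: a; b] by rewrite /= inE andbT; apply/eqP => e; apply: ba; rewrite e.
have sA : [set` [:: a; b]] `<=` A k by move=> i /=; rewrite !inE => /orP[/eqP->|/eqP->].
have := sum_le_esum (fun g => s k g z) u sA.
rewrite Hspart big_cons big_seq1 (spline_eq1 Aa hz) lee_fin => h.
by apply/le_anti; rewrite spline_ge0 // andbT; lra.
Qed.

End Splines.

Section Wavelets.
Context {R : realType} {dT : measure_display} {T : measurableType dT} {I : choiceType}.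
Variables (d : T -> T -> R) (mu : {measure set T -> \bar R}).
Hypotheses (Hmetric : is_metric d)
  (Hborel : forall U : set T, dopen d U -> measurable U)
  (Hball_pos : forall (z : T) (r : R), 0 < r -> (0 < mu (dball d z r))%E)
  (Hball_fin : forall (z : T) (r : R), (mu (dball d z r) < +oo)%E).
Variables (delta : R) (A : int -> set I) (x : I -> T) (Q : int -> I -> set T)
  (s : int -> I -> T -> R) (P : int -> I -> I -> R).
Hypotheses (Hdelta : 0 < delta)
  (HQmeas : forall k a, A k a -> measurable (Q k a))
  (HQdisj : forall (k : int) (a b : I), A k a -> A k b -> a <> b -> Q k a `&` Q k b = set0)
  (HQball : forall (k : int) (a : I), A k a ->
    dball d (x a) (delta ^ k / 3) `<=` Q k a /\ Q k a `<=` dball d (x a) (4 * delta ^ k))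
  (Hsind : forall (k : int) (a : I) (z : T), A k a ->
    \1_(dball d (x a) (delta ^ k / 8)) z <= s k a z <= \1_(dball d (x a) (8 * delta ^ k)) z)
  (Hsoff : forall (k : int) (a b : I), A k a -> A k b -> a <> b -> s k a (x b) = 0)
  (Hspart : forall (k : int) (z : T), (\esum_(a in A k) (s k a z)%:E = 1)%E).

Lemma in_scrI_core k a b : in_scrI A Q k a b ->
  dball d (x b) (delta ^ (k + 1) / 3) `<=` Q k a.
Proof. by case=> _ [_ [[Ab Qsub] _]] z /(HQball Ab).1; apply: Qsub. Qed.

Lemma in_scrI_Gset k a b : in_scrI A Q k a b -> Gset A k b.
Proof.
move=> hkab; have [Aka [_ [[Ab _] ba]]] := hkab; split => // Akb.
have h1 : Q k a (x b).
  by apply: in_scrI_core hkab _ _; apply: dball_center => //; rewrite divr_gt0 ?exprz_gt0.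
have h2 : Q k b (x b).
  by apply: (HQball Akb).1; apply: dball_center => //; rewrite divr_gt0 ?exprz_gt0.
by have := HQdisj Aka Akb (fun e => ba (esym e)); move/seteqP => [/(_ (x b) (conj h1 h2))].
Qed.

Lemma Mtilde_eq0_far k l b : A (k + 1) l -> A (k + 1) b ->
  16 * delta ^ (k + 1) <= d (x b) (x l) -> Mtilde mu d delta x s k l b = 0.
Proof.
move=> Al Ab far.
have prod0 w : s (k + 1) l w * s (k + 1) b w = 0.
  have [hl|hl] := lerP (8 * delta ^ (k + 1)) (d (x l) w).
    by rewrite (spline_eq0_far Hsind Al hl) mul0r.
  rewrite (spline_eq0_far Hsind Ab) ?mulr0 //.
  by have := dist_triangle Hmetric (x b) w (x l); rewrite (distC Hmetric w (x l)); lra.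
by rewrite /Mtilde; under eq_integral => w _ do rewrite prod0; rewrite integral0 /= mul0r.
Qed.

Lemma psi_core k b z : Gset A k b -> dball d (x b) (delta ^ (k + 1) / 8) z ->
  psi mu d delta A x s P k b z = P k b b / Num.sqrt (Vol mu d (x b) (delta ^ (k + 1))).
Proof.
move=> [Ab nAb] hz.
pose f g := P k b g * s (k + 1) g z / Num.sqrt (Vol mu d (x g) (delta ^ (k + 1))).
have f0 g : Gset A k g -> g \notin [:: b] -> f g = 0.
  move=> [Ag _]; rewrite mem_seq1 => /eqP gb.
  by rewrite /f (spline_eq0_near_other Hsind Hspart Ab Ag gb hz) mulr0 mul0r.
have bG : [set` [:: b]] `<=` Gset A k by move=> g /=; rewrite mem_seq1 => /eqP ->.
rewrite /psi -/f (gsumE (summable_fin (s0 := [:: b]) isT f0)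
  (is_usum_fin (s0 := [:: b]) isT bG f0)) big_seq1.
by rewrite /f (spline_eq1 Hsind Ab hz) mulr1.
Qed.

Lemma wavelet_coefficient_diag_ge CX Lam k b :
  (forall (z : T) (r : R), 0 < r -> (mu (dball d z (2 * r)) <= CX%:E * mu (dball d z r))%E) ->
  op_bounded (Gset A k) (Mtilde mu d delta x s k) Lam ->
  is_inv_sqrt (Gset A k) (Mtilde mu d delta x s k) (P k) -> Gset A k b ->
  1 / (1 + `|Lam|) <= P k b b.
Proof.
move=> hCX hM [[Lp hPb] [hPs [hPp hPPM]]] Gb; set r := delta ^ (k + 1).
have r0 : 0 < r by apply: exprz_gt0.
have sep l l' : Gset A k l -> Gset A k l' -> l <> l' -> r / 8 <= d (x l) (x l').
  by move=> [Al _] [Al' _]; have := dyadic_points_separated Hsind Hsoff Al Al'; apply.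
pose S := [set l | Gset A k l /\ d (x b) (x l) < 16 * r].
have finS : finite_set S :=
  separated_near_finite Hmetric Hborel Hball_pos Hball_fin hCX (x b) r0 sep.
pose F0 := fset_set S.
have memF0 l : (l \in F0) = (l \in S) := in_fset_set finS l.
have F0G : [set` F0] `<=` Gset A k by move=> l /=; rewrite memF0 => /set_mem [].
have bF0 : b \in F0 by rewrite memF0; apply/mem_set; split => //; rewrite dist_self //; lra.
have hM0 l : Gset A k l -> l \notin F0 -> Mtilde mu d delta x s k l b = 0.
  move=> Gl; rewrite memF0 => nl; apply: Mtilde_eq0_far; [exact: Gl.1 | exact: Gb.1 |].
  by rewrite leNgt; apply: contra nl => near; apply/mem_set.
apply: (inv_sqrt_diag_ge hPb hPs hPp Gb (fset_uniq _) F0G bF0 hM0 _ hM) => i Gi.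
by rewrite hPPM //; case: (i == b).
Qed.

Lemma Vol_le_cube_measure CX k a b :
  (forall (z : T) (r : R), 0 < r -> (mu (dball d z (2 * r)) <= CX%:E * mu (dball d z r))%E) ->
  in_scrI A Q k a b -> Vol mu d (x b) (delta ^ (k + 1)) <= CX ^+ 2 * fine (mu (Q k a)).
Proof.
move=> hCX hkab; have Aka := hkab.1; set r := delta ^ (k + 1).
have r0 : 0 < r by apply: exprz_gt0.
have mQ : measurable (Q k a) := HQmeas Aka.
have mQE : mu (Q k a) = (fine (mu (Q k a)))%:E.
  rewrite fineK // ge0_fin_numE ?measure_ge0 //.
  apply: le_lt_trans (Hball_fin (x a) (4 * delta ^ k)).
  exact: le_measure (mem_set mQ) (mem_set (measurable_dball Hmetric Hborel _ _)) (HQball Aka).2.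
have hV3 : Vol mu d (x b) (r / 3) <= fine (mu (Q k a)).
  by rewrite -lee_fin -mQE; apply: Vol_le_measure => //; exact: in_scrI_core.
have := Vol_double_iter Hball_pos Hball_fin hCX (x b) 2 (_ : 0 < r / 4).
have -> : (2 : R) ^+ 2 * (r / 4) = r by rewrite expr2; lra.
move=> /(_ ltac:(by rewrite divr_gt0)) h; apply: le_trans h _.
rewrite ler_pM2l ?exprn_gt0 ?(doubling_const_gt0 Hball_pos Hball_fin hCX (x b)) //.
by apply: le_trans hV3; apply: le_Vol => //; apply: dball_sub; lra.
Qed.

End Wavelets.

Unset Implicit Arguments.

Theorem theorem2p8
  (R : realType) (dT : measure_display) (T : measurableType dT)
  (d : T -> T -> R) (mu : {measure set T -> \bar R})
  (Hmetric : is_metric d)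
  (Hborel : forall U : set T, dopen d U -> measurable U)
  (Hball_pos : forall (z : T) (r : R), 0 < r -> (0 < mu (dball d z r))%E)
  (Hball_fin : forall (z : T) (r : R), (mu (dball d z r) < +oo)%E)
  (Hdoubling : exists CX : R, forall (z : T) (r : R), 0 < r ->
      (mu (dball d z (2 * r)) <= CX%:E * mu (dball d z r))%E)
  (Hdiam : forall r : R, exists z w : T, r < d z w)
  (Hatom : forall z : T, mu [set z] = 0%E)
  (delta : R) (Hdelta : 0 < delta <= 1 / 1000)
  (I : choiceType) (A : int -> set I) (x : I -> T)
  (Hxinj : forall (a b : I) (k l : int), A k a -> A l b -> x a = x b -> a = b)
  (HAnest : forall k : int, A k `<=` A (k + 1))
  (HX0 : max_separated d 1 (x @` A 0) setT)
  (HXpos : forall n : nat, (x @` A n `<=` x @` A n.+1) /\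
      max_separated d (delta ^ (Posz n.+1)) (x @` A n.+1) setT)
  (HXneg : forall n : nat,
      max_separated d (delta ^ (- Posz n.+1)) (x @` A (- Posz n.+1)) (x @` A (- Posz n)))
  (Q : int -> I -> set T)
  (HQmeas : forall k a, A k a -> measurable (Q k a))
  (HQcover : forall (k : int) (z : T), exists2 a, A k a & Q k a z)
  (HQdisj : forall (k : int) (a b : I), A k a -> A k b -> a <> b -> Q k a `&` Q k b = set0)
  (HQnest : forall (k l : int) (a b : I), k <= l -> A k a -> A l b ->
      Q l b `<=` Q k a \/ Q l b `&` Q k a = set0)
  (HQball : forall (k : int) (a : I), A k a ->
      dball d (x a) (delta ^ k / 3) `<=` Q k a /\ Q k a `<=` dball d (x a) (4 * delta ^ k))
  (HLdist : forall (k : int) (a b : I), A k a -> Lset A Q k a b ->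
      d (x b) (x a) < 2 * delta ^ k)
  (s : int -> I -> T -> R)
  (Hsmeas : forall k a, A k a -> measurable_fun setT (s k a))
  (Hsind : forall (k : int) (a : I) (z : T), A k a ->
      \1_(dball d (x a) (delta ^ k / 8)) z <= s k a z <=
      \1_(dball d (x a) (8 * delta ^ k)) z)
  (Hsdiag : forall (k : int) (a : I), A k a -> s k a (x a) = 1)
  (Hsoff : forall (k : int) (a b : I), A k a -> A k b -> a <> b -> s k a (x b) = 0)
  (Hspart : forall (k : int) (z : T), (\esum_(a in A k) (s k a z)%:E = 1)%E)
  (Hsholder : exists (Cs eta : R), 0 < eta <= 1 /\
      forall (k : int) (a : I) (z w : T), A k a ->
        `|s k a z - s k a w| <= Cs * powR (d z w / delta ^ k) eta)
  (HMbound : exists Lam : R, forall k : int,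
      op_bounded (Gset A k) (Mtilde mu d delta x s k) Lam)
  (HMpos : forall k : int, mx_positive (Gset A k) (Mtilde mu d delta x s k))
  (P : int -> I -> I -> R)
  (HP : forall k : int, is_inv_sqrt (Gset A k) (Mtilde mu d delta x s k) (P k)) :
  exists (eps0 C : R), 0 < eps0 < 1 /\ 0 < C /\
    forall (k : int) (a b : I), in_scrI A Q k a b ->
      dball d (x b) (eps0 * delta ^ k) `<=` Q k a /\
      forall z : T, dball d (x b) (eps0 * delta ^ k) z ->
        C * (1 / Num.sqrt (fine (mu (Q k a)))) <= `|psi mu d delta A x s P k b z|.
Proof.
have [CX hCX] := Hdoubling; have [Lam hLam] := HMbound.
have /andP[delta0 delta_small] := Hdelta.
have [z0 _] := Hdiam 0.
have CX0 := doubling_const_gt0 Hball_pos Hball_fin hCX z0.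
have c00 : 0 < 1 / (1 + `|Lam|) by rewrite divr_gt0 // ltr_pwDl ?normr_ge0.
exists (delta / 8), (1 / (1 + `|Lam|) / CX).
split; first by apply/andP; split; lra.
split; first by rewrite divr_gt0.
move=> k a b hkab; have Gb := in_scrI_Gset Hmetric delta0 HQdisj HQball hkab.
have r0 : 0 < delta ^ (k + 1) by apply: exprz_gt0.
have -> : delta / 8 * delta ^ k = delta ^ (k + 1) / 8.
  by rewrite exprzDr ?unitfE ?gt_eqF // expr1z; ring.
split.
  by apply: subset_trans (in_scrI_core HQball hkab); apply: dball_sub; lra.
move=> z hz; rewrite (psi_core mu P Hsind Hspart Gb hz).
have hV := Vol_le_cube_measure Hmetric Hborel Hball_pos Hball_fin delta0 HQmeas HQball hCX hkab.
apply: ratio_lower_bound hV => //; last exact: Vol_gt0 Hball_pos Hball_fin _ _ r0.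
exact: (wavelet_coefficient_diag_ge Hmetric Hborel Hball_pos Hball_fin delta0 Hsind Hsoff
  hCX (hLam k) (HP k) Gb).
Qed.
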